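(* Let $n=1$, $r\in\{-1,+1\}$ and $\Phi(x,y)=r\phi(x-y)$. Let $f:\mathbb R\to\mathbb R$, $f(x)=\max_{i\in I}\Phi(x,y_i)-\beta_i$ for a finite nonempty index set $I$ and $y_i,\beta_i\in\mathbb R$. Then $f$ is a-strongly convex if $r=+1$, and a-weakly convex if $r=-1$.
   Context: Standing assumption (here with $n=1$): $\phi:\mathbb R\to\mathbb R$ is convex, finite-valued, differentiable and strictly convex, super-coercive; $\phi^*$ has the same properties and $(\phi^* )'=(\phi')^{-1}$. $\partial f$ is the limiting subdifferential. A proper lsc $f$ is a-weakly convex if for every $(\bar x,\bar v)\in\operatorname{graph}\partial f$, $f(x)\ge f(\bar x)-\phi(x-\bar x+(\phi^* )'(-\bar v))+\phi((\phi^* )'(-\bar v))$ for all $x$; a-strongly convex if $f(x)\ge f(\bar x)+\phi(x-\bar x+(\phi^* )'(\bar v))-\phi((\phi^* )'(\bar v))$ for all $x$. *)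

From Stdlib Require Import Reals.
From Coquelicot Require Import Coquelicot.
Open Scope R_scope.

Definition convex_fun (g : R -> R) : Prop :=
  forall x y t, 0 <= t <= 1 -> g (t * x + (1 - t) * y) <= t * g x + (1 - t) * g y.

Definition strictly_convex_fun (g : R -> R) : Prop :=
  forall x y t, x <> y -> 0 < t < 1 -> g (t * x + (1 - t) * y) < t * g x + (1 - t) * g y.

Definition differentiable_fun (g : R -> R) : Prop := forall x, ex_derive g x.

Definition super_coercive (g : R -> R) : Prop :=
  is_lim (fun x => g x / Rabs x) p_infty p_infty /\
  is_lim (fun x => g x / Rabs x) m_infty p_infty.

Definition conjR (g : R -> R) (y : R) : Rbar :=
  Lub_Rbar (fun z => exists x, z = x * y - g x).

(* the real-valued conjugate (meaningful when conjR g y is finite) *)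
Definition phistar (g : R -> R) (y : R) : R := real (conjR g y).

Definition standing_assumption (phi : R -> R) : Prop :=
  convex_fun phi /\ differentiable_fun phi /\ strictly_convex_fun phi /\ super_coercive phi /\
  (forall y, is_finite (conjR phi y)) /\
  convex_fun (phistar phi) /\ differentiable_fun (phistar phi) /\
  strictly_convex_fun (phistar phi) /\ super_coercive (phistar phi) /\
  (forall x, Derive (phistar phi) (Derive phi x) = x) /\
  (forall y, Derive phi (Derive (phistar phi) y) = y).

(* Frechet (regular) subdifferential:
   v in dhat f(x)  iff  liminf_{z -> x, z <> x} (f z - f x - v (z - x)) / |z - x| >= 0,
   written out in epsilon-delta form. *)
Definition frechet_subdiff (f : R -> R) (x v : R) : Prop :=
  forall eps : R, 0 < eps -> exists delta : R, 0 < delta /\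
    forall z, Rabs (z - x) < delta -> f z >= f x + v * (z - x) - eps * Rabs (z - x).

Definition limiting_subdiff (f : R -> R) (x v : R) : Prop :=
  exists (xs vs : nat -> R),
    is_lim_seq xs x /\ is_lim_seq (fun k => f (xs k)) (f x) /\
    (forall k, frechet_subdiff f (xs k) (vs k)) /\ is_lim_seq vs v.

Definition a_weakly_convex (phi f : R -> R) : Prop :=
  forall xb vb, limiting_subdiff f xb vb ->
    forall x, f x >= f xb - phi (x - xb + Derive (phistar phi) (- vb))
                       + phi (Derive (phistar phi) (- vb)).

Definition a_strongly_convex (phi f : R -> R) : Prop :=
  forall xb vb, limiting_subdiff f xb vb ->
    forall x, f x >= f xb + phi (x - xb + Derive (phistar phi) vb)
                       - phi (Derive (phistar phi) vb).

(* maximum of g 0, ..., g N  (finite nonempty index set {0,...,N}) *)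
Fixpoint max_upto (N : nat) (g : nat -> R) : R :=
  match N with
  | O => g O
  | S k => Rmax (max_upto k g) (g (S k))
  end.

From Stdlib Require Import Reals Lra Lia Classical.
From Coquelicot Require Import Coquelicot.
Open Scope R_scope.

(* Let f be the max of the pieces r phi(. - y_i) - beta_i and v a Frechet subgradient of f at x0.
   On each side of x0 some active piece has derivative on the correct side of v: to the right
   some active d_i >= v, to the left some active d_i <= v, for otherwise f would stay below a
   line of slope < v (resp. > v) through (x0, f x0).  Put t = phistar'(r v), so that
   phi'(t) = r v.  Since phi' is increasing and injective, comparing r phi'(t) = v with
   d_i = r phi'(x0 - y_i) orders t and x0 - y_i, and convexity of phi (the increment
   phi(s + u) - phi(u) is nondecreasing in u for s >= 0) gives
   r (phi(x - x0 + t) - phi t) <= r phi(x - y_i) - r phi(x0 - y_i), which is the claimed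
   inequality because the piece i is active at x0 and below f at x.  Limiting subgradients
   follow by continuity of phi and of phistar', the inverse of the increasing bijection phi'. *)

Lemma locally_Rabs_lt (x0 delta : R) (P : R -> Prop) :
  0 < delta -> (forall z, Rabs (z - x0) < delta -> P z) -> locally x0 P.
Proof. intros Hd HP. exists (mkposreal delta Hd). exact HP. Qed.

Lemma locally_scal_lt (x0 c m : R) : 0 < m -> locally x0 (fun z => c * (z - x0) < m).
Proof.
  intros Hm. pose proof (Rabs_pos c) as Hc.
  apply (locally_Rabs_lt _ (m / (Rabs c + 1))); [apply Rdiv_lt_0_compat; lra|].
  intros z Hz. apply (Rmult_lt_compat_r (Rabs c + 1)) in Hz; [|lra].
  unfold Rdiv in Hz. rewrite Rmult_assoc, Rinv_l in Hz by lra.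
  pose proof (Rle_abs (c * (z - x0))) as Hle. rewrite Rabs_mult in Hle.
  pose proof (Rabs_pos (z - x0)). nra.
Qed.

Lemma at_right_gt (x0 : R) : at_right x0 (fun z => x0 < z).
Proof. unfold at_right, within. now apply filter_forall. Qed.

Lemma is_derive_locally_bound (g : R -> R) (x0 d : R) (eps : posreal) :
  is_derive g x0 d ->
  locally x0 (fun z : R => Rabs (g z - g x0 - d * (z - x0)) <= eps * Rabs (z - x0)).
Proof.
  intros [_ Hd]. refine (filter_imp _ _ _ (Hd x0 (fun P HP => HP) eps)); intros z.
  unfold norm, minus, plus, opp, scal, abs, mult; simpl.
  now replace (g z - g x0 - d * (z - x0)) with (g z + - g x0 + - ((z + - x0) * d)) by ring.
Qed.

Lemma is_derive_at_right_upper (g : R -> R) (x0 d eps : R) :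
  is_derive g x0 d -> 0 < eps ->
  at_right x0 (fun z => g z <= g x0 + (d + eps) * (z - x0)).
Proof.
  intros Hd He. assert (H := is_derive_locally_bound g x0 d (mkposreal eps He) Hd).
  refine (filter_imp _ _ _ (filter_and _ _ (filter_le_within _ _ H) (at_right_gt x0))).
  intros z [Hb Hz].
  simpl in Hb. rewrite (Rabs_pos_eq (z - x0)) in Hb by lra.
  pose proof (Rle_abs (g z - g x0 - d * (z - x0))). nra.
Qed.

Definition right_slope_below (F : R -> R) (x0 a v : R) : Prop :=
  exists w, w < v /\ at_right x0 (fun z => F z <= a + w * (z - x0)).

Lemma right_slope_below_Rmax (F G : R -> R) (x0 a v : R) :
  right_slope_below F x0 a v -> right_slope_below G x0 a v ->
  right_slope_below (fun z => Rmax (F z) (G z)) x0 a v.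
Proof.
  intros [w1 [Hw1 HF]] [w2 [Hw2 HG]]. exists (Rmax w1 w2).
  split; [now apply Rmax_lub_lt|].
  refine (filter_imp _ _ _ (filter_and _ _ (filter_and _ _ HF HG) (at_right_gt x0))).
  intros z [[Fz Gz] Hz].
  pose proof (Rmult_le_compat_r (z - x0) _ _ ltac:(lra) (Rmax_l w1 w2)).
  pose proof (Rmult_le_compat_r (z - x0) _ _ ltac:(lra) (Rmax_r w1 w2)).
  apply Rmax_lub; lra.
Qed.

Lemma right_slope_below_derive (g : R -> R) (x0 a v d : R) :
  is_derive g x0 d -> g x0 <= a -> g x0 < a \/ d < v -> right_slope_below g x0 a v.
Proof.
  intros Hd Ha [Hlt | Hdv].
  - exists (v - 1). split; [lra|].
    assert (Hlin := @filter_le_within _ (locally x0) _ (fun z => x0 < z) _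
                      (locally_scal_lt x0 (d + 1 - (v - 1)) (a - g x0) ltac:(lra))).
    refine (filter_imp _ _ _ (filter_and _ _ (is_derive_at_right_upper g x0 d 1 Hd Rlt_0_1) Hlin)).
    intros z [Hz Hl]. lra.
  - exists ((d + v) / 2). split; [lra|].
    assert (Hup := is_derive_at_right_upper g x0 d ((v - d) / 2) Hd ltac:(lra)).
    refine (filter_imp _ _ _ Hup); intros z Hz.
    replace (d + (v - d) / 2) with ((d + v) / 2) in Hz by field. lra.
Qed.

Lemma max_upto_ge (N : nat) (g : nat -> R) (i : nat) : (i <= N)%nat -> g i <= max_upto N g.
Proof.
  induction N as [|N IH]; intros Hi; simpl.
  - replace i with 0%nat by lia. lra.
  - destruct (Nat.eq_dec i (S N)) as [->|Hne]; [apply Rmax_r|].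
    eapply Rle_trans; [apply IH; lia | apply Rmax_l].
Qed.

Lemma right_slope_below_max_upto (N : nat) (G : nat -> R -> R) (x0 a v : R) :
  (forall i, (i <= N)%nat -> right_slope_below (G i) x0 a v) ->
  right_slope_below (fun z => max_upto N (fun i => G i z)) x0 a v.
Proof.
  induction N as [|N IH]; intros HG; simpl.
  - exact (HG 0%nat (le_n 0)).
  - apply right_slope_below_Rmax; [apply IH; intros i Hi; apply HG; lia | exact (HG _ (le_n _))].
Qed.

Lemma frechet_subdiff_not_right_slope_below (f : R -> R) (x0 v : R) :
  frechet_subdiff f x0 v -> ~ right_slope_below f x0 (f x0) v.
Proof.
  intros Hf [w [Hw Hright]].
  destruct (Hf ((v - w) / 2) ltac:(lra)) as [delta [Hdelta Hnear]].
  assert (Hloc := @filter_le_within _ (locally x0) _ (fun z => x0 < z) _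
                    (locally_Rabs_lt x0 delta _ Hdelta Hnear)).
  destruct (filter_ex _ (filter_and _ _ (filter_and _ _ Hright Hloc) (at_right_gt x0)))
    as [z [[Hup Hlow] Hz]].
  rewrite Rabs_pos_eq in Hlow by lra. nra.
Qed.

Lemma frechet_subdiff_max_upto_active_ge (N : nat) (G : nat -> R -> R) (d : nat -> R) (x0 v : R) :
  (forall i, (i <= N)%nat -> is_derive (G i) x0 (d i)) ->
  frechet_subdiff (fun z => max_upto N (fun i => G i z)) x0 v ->
  exists i, (i <= N)%nat /\ G i x0 = max_upto N (fun i => G i x0) /\ v <= d i.
Proof.
  intros Hd Hf. apply NNPP. intros Hnone.
  apply (frechet_subdiff_not_right_slope_below _ _ _ Hf), right_slope_below_max_upto.
  intros i Hi. apply (right_slope_below_derive _ _ _ _ (d i) (Hd i Hi)).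
  - exact (max_upto_ge N (fun i => G i x0) i Hi).
  - destruct (Rle_lt_or_eq_dec _ _ (max_upto_ge N (fun i => G i x0) i Hi)) as [Hinactive | Hactive];
      [now left | right].
    apply Rnot_le_lt. intros Hvd. apply Hnone. now exists i.
Qed.

Lemma frechet_subdiff_reflect (f : R -> R) (x v : R) :
  frechet_subdiff f x v -> frechet_subdiff (fun z => f (- z)) (- x) (- v).
Proof.
  intros Hf eps Heps. destruct (Hf eps Heps) as [delta [Hdelta Hnear]].
  exists delta. split; [exact Hdelta|]. intros z Hz.
  replace (z - - x) with (- (- z - x)) in * by ring. rewrite Rabs_Ropp in *.
  rewrite Ropp_involutive. specialize (Hnear (- z) Hz). lra.
Qed.

Lemma is_derive_reflect (g : R -> R) (x d : R) :
  is_derive g x d -> is_derive (fun z => g (- z)) (- x) (- d).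
Proof.
  intros Hd. rewrite <- (Ropp_involutive x) in Hd.
  replace (- d) with (scal (-1) d) by (unfold scal; simpl; unfold mult; simpl; ring).
  apply (is_derive_comp g Ropp); [exact Hd|].
  auto_derive; [exact I | ring].
Qed.

Lemma frechet_subdiff_max_upto_active_le (N : nat) (G : nat -> R -> R) (d : nat -> R) (x0 v : R) :
  (forall i, (i <= N)%nat -> is_derive (G i) x0 (d i)) ->
  frechet_subdiff (fun z => max_upto N (fun i => G i z)) x0 v ->
  exists i, (i <= N)%nat /\ G i x0 = max_upto N (fun i => G i x0) /\ d i <= v.
Proof.
  intros Hd Hf.
  destruct (frechet_subdiff_max_upto_active_ge N (fun i z => G i (- z)) (fun i => - d i)
              (- x0) (- v)) as [i [Hi [Hact Hle]]].
  - intros i Hi. exact (is_derive_reflect _ _ _ (Hd i Hi)).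
  - exact (frechet_subdiff_reflect _ _ _ Hf).
  - exists i. rewrite Ropp_involutive in Hact. repeat split; [exact Hi | exact Hact | lra].
Qed.

Lemma convex_derive_ineq (phi : R -> R) (a b D : R) :
  convex_fun phi -> is_derive phi a D -> phi a + D * (b - a) <= phi b.
Proof.
  intros Hconv Hd. set (c := b - a).
  assert (Hchord : forall t, 0 < t <= 1 -> (phi (a + t * c) - phi a) / t <= phi b - phi a).
  { intros t Ht. pose proof (Hconv b a t ltac:(lra)) as H.
    replace (t * b + (1 - t) * a) with (a + t * c) in H by (unfold c; ring).
    apply (Rmult_le_reg_r t); [lra|]. unfold Rdiv. rewrite Rmult_assoc, Rinv_l by lra. lra. }
  assert (Hline : derivable_pt_lim (fun t => phi (a + t * c)) 0 (c * D)).
  { apply is_derive_Reals. replace (c * D) with (scal c D) by reflexivity.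
    apply (is_derive_comp phi (fun t => a + t * c)).
    - now rewrite Rmult_0_l, Rplus_0_r.
    - auto_derive; [exact I | ring]. }
  apply Rnot_lt_le. intros Hlt.
  destruct (Hline (D * c - (phi b - phi a)) ltac:(lra)) as [[delta Hdelta] Hq]; simpl in Hq.
  set (h := Rmin 1 (delta / 2)).
  assert (Hh : 0 < h <= 1) by (split; [apply Rmin_glb_lt|apply Rmin_l]; lra).
  assert (Hhd : h <= delta / 2) by apply Rmin_r.
  specialize (Hq h ltac:(lra) ltac:(rewrite Rabs_pos_eq; lra)).
  rewrite Rplus_0_l, Rmult_0_l, Rplus_0_r in Hq.
  pose proof (Hchord h Hh). pose proof (Rle_abs (c * D - (phi (a + h * c) - phi a) / h)).
  rewrite Rabs_minus_sym in Hq. lra.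
Qed.

Lemma convex_Derive_le (phi : R -> R) (a b : R) :
  convex_fun phi -> differentiable_fun phi -> a <= b -> Derive phi a <= Derive phi b.
Proof.
  intros Hconv Hdiff Hab.
  pose proof (convex_derive_ineq phi a b _ Hconv (Derive_correct _ _ (Hdiff a))).
  pose proof (convex_derive_ineq phi b a _ Hconv (Derive_correct _ _ (Hdiff b))).
  destruct (Req_dec a b) as [->|Hne]; [lra | nra].
Qed.

Lemma convex_increment_le (phi : R -> R) (u u' s : R) :
  convex_fun phi -> u <= u' -> 0 <= s -> phi (s + u) - phi u <= phi (s + u') - phi u'.
Proof.
  intros Hconv Hu Hs. set (L := s + u' - u).
  destruct (Req_dec L 0) as [HL|HL].
  { replace s with 0 by (unfold L in HL; lra). replace u' with u by (unfold L in HL; lra). lra. }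
  (* s + u and u' are the convex combinations of u and s + u' with swapped weights l, 1 - l. *)
  set (l := (u' - u) / L).
  assert (Hl : 0 <= l <= 1).
  { unfold l. split; [apply Rdiv_le_0_compat; unfold L in *; lra|].
    apply (Rmult_le_reg_r L); [unfold L in *; lra|].
    unfold Rdiv. rewrite Rmult_assoc, Rinv_l by exact HL. unfold L; lra. }
  pose proof (Hconv u (s + u') l ltac:(lra)) as H1.
  pose proof (Hconv u (s + u') (1 - l) ltac:(lra)) as H2.
  replace (l * u + (1 - l) * (s + u')) with (s + u) in H1 by (unfold l, L in *; field; exact HL).
  replace ((1 - l) * u + (1 - (1 - l)) * (s + u')) with u' in H2
    by (unfold l, L in *; field; exact HL).
  lra.
Qed.

Lemma convex_increment_ge (phi : R -> R) (u u' s : R) :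
  convex_fun phi -> u <= u' -> s <= 0 -> phi (s + u') - phi u' <= phi (s + u) - phi u.
Proof.
  intros Hconv Hu Hs.
  pose proof (convex_increment_le phi (s + u) (s + u') (- s) Hconv ltac:(lra) ltac:(lra)) as H.
  replace (- s + (s + u)) with u in H by ring. replace (- s + (s + u')) with u' in H by ring. lra.
Qed.

Lemma right_inverse_continuity_pt (D P : R -> R) (v : R) :
  (forall a b, D a <= D b <-> a <= b) -> (forall u, D (P u) = u) -> continuity_pt P v.
Proof.
  intros Hle HDP eps Heps. set (t := P v).
  assert (Hlo : D (t - eps) < v).
  { rewrite <- (HDP v). apply Rnot_le_lt. rewrite Hle. unfold t. lra. }
  assert (Hhi : v < D (t + eps)).
  { rewrite <- (HDP v) at 1. apply Rnot_le_lt. rewrite Hle. unfold t. lra. }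
  exists (Rmin (v - D (t - eps)) (D (t + eps) - v)).
  split; [apply Rmin_glb_lt; lra|]. intros u [_ Hu]. simpl in *. unfold R_dist in *.
  pose proof (Rmin_l (v - D (t - eps)) (D (t + eps) - v)).
  pose proof (Rmin_r (v - D (t - eps)) (D (t + eps) - v)).
  pose proof (Rle_abs (u - v)). pose proof (Rle_abs (- (u - v))). rewrite Rabs_Ropp in *.
  apply Rabs_def1.
  - apply Rnot_le_lt. intros Hge.
    assert (Hmono : D (t + eps) <= D (P u)) by (apply Hle; lra). rewrite HDP in Hmono. lra.
  - apply Rnot_le_lt. intros Hge.
    assert (Hmono : D (P u) <= D (t - eps)) by (apply Hle; lra). rewrite HDP in Hmono. lra.
Qed.

Section Standing.

Variable phi : R -> R.
Hypothesis phi_convex : convex_fun phi.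
Hypothesis phi_differentiable : differentiable_fun phi.
Hypothesis Derive_phistar_Derive : forall x, Derive (phistar phi) (Derive phi x) = x.
Hypothesis Derive_Derive_phistar : forall y, Derive phi (Derive (phistar phi) y) = y.

Lemma Derive_le_iff (a b : R) : Derive phi a <= Derive phi b <-> a <= b.
Proof.
  split; [|now apply convex_Derive_le]. intros Hab. apply Rnot_lt_le. intros Hba.
  pose proof (convex_Derive_le phi b a phi_convex phi_differentiable (Rlt_le _ _ Hba)).
  assert (Heq : Derive phi a = Derive phi b) by lra.
  apply (f_equal (Derive (phistar phi))) in Heq. rewrite !Derive_phistar_Derive in Heq. lra.
Qed.

Lemma scaled_increment_le (r t u s : R) : r = 1 \/ r = -1 ->
  (0 <= s /\ r * Derive phi t <= r * Derive phi u) \/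
  (s <= 0 /\ r * Derive phi u <= r * Derive phi t) ->
  r * (phi (s + t) - phi t) <= r * (phi (s + u) - phi u).
Proof.
  pose proof (Derive_le_iff t u) as Htu. pose proof (Derive_le_iff u t) as Hut.
  intros [-> | ->] [[Hs Hd] | [Hs Hd]].
  - pose proof (convex_increment_le phi t u s phi_convex (proj1 Htu ltac:(lra)) Hs). lra.
  - pose proof (convex_increment_ge phi u t s phi_convex (proj1 Hut ltac:(lra)) Hs). lra.
  - pose proof (convex_increment_le phi u t s phi_convex (proj1 Hut ltac:(lra)) Hs). lra.
  - pose proof (convex_increment_ge phi t u s phi_convex (proj1 Htu ltac:(lra)) Hs). lra.
Qed.

Variables (r : R) (N : nat) (y beta : nat -> R).
Hypothesis r_sign : r = 1 \/ r = -1.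

Let f (x : R) : R := max_upto N (fun i => r * phi (x - y i) - beta i).

Lemma frechet_subdiff_shifted_max_ineq (x0 v x : R) : frechet_subdiff f x0 v ->
  f x >= f x0 + r * (phi (x - x0 + Derive (phistar phi) (r * v))
                     - phi (Derive (phistar phi) (r * v))).
Proof.
  intros Hf. set (t := Derive (phistar phi) (r * v)).
  assert (Ht : r * Derive phi t = v).
  { unfold t. rewrite Derive_Derive_phistar. destruct r_sign as [-> | ->]; ring. }
  assert (Hd : forall i, (i <= N)%nat ->
            is_derive (fun z => r * phi (z - y i) - beta i) x0 (r * Derive phi (x0 - y i))).
  { intros i _. auto_derive; [exact (phi_differentiable _) | now rewrite Rmult_1_l]. }
  assert (Hact : exists i, (i <= N)%nat /\ r * phi (x0 - y i) - beta i = f x0 /\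
            r * (phi (x - x0 + t) - phi t) <= r * (phi (x - x0 + (x0 - y i)) - phi (x0 - y i))).
  { destruct (Rle_or_lt 0 (x - x0)) as [Hs | Hs].
    - destruct (frechet_subdiff_max_upto_active_ge N _ _ x0 v Hd Hf) as [i [Hi [Hmax Hle]]].
      exists i. repeat split; [exact Hi | exact Hmax|].
      apply scaled_increment_le; [exact r_sign | left; lra].
    - destruct (frechet_subdiff_max_upto_active_le N _ _ x0 v Hd Hf) as [i [Hi [Hmax Hle]]].
      exists i. repeat split; [exact Hi | exact Hmax|].
      apply scaled_increment_le; [exact r_sign | right; lra]. }
  destruct Hact as [i [Hi [Hmax Hcmp]]].
  pose proof (max_upto_ge N (fun i => r * phi (x - y i) - beta i) i Hi).
  replace (x - x0 + (x0 - y i)) with (x - y i) in Hcmp by ring.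
  unfold f in *. lra.
Qed.

Lemma limiting_subdiff_shifted_max_ineq (xb vb x : R) : limiting_subdiff f xb vb ->
  f x >= f xb + r * (phi (x - xb + Derive (phistar phi) (r * vb))
                     - phi (Derive (phistar phi) (r * vb))).
Proof.
  intros [xs [vs [Hxs [Hfxs [Hfrechet Hvs]]]]].
  set (P := Derive (phistar phi)).
  assert (HP : forall w, continuity_pt P w).
  { intros w. exact (right_inverse_continuity_pt _ P w Derive_le_iff Derive_Derive_phistar). }
  assert (Hphi : forall c, continuity_pt phi c).
  { intros c. apply continuity_pt_filterlim.
    exact (@ex_derive_continuous R_AbsRing R_NormedModule phi c (phi_differentiable c)). }
  assert (HPs : is_lim_seq (fun k => P (r * vs k)) (P (r * vb))).
  { apply is_lim_seq_continuous; [apply HP|]. exact (is_lim_seq_scal_l vs r vb Hvs). }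
  assert (Hlim : is_lim_seq
            (fun k => f (xs k) + r * (phi (x - xs k + P (r * vs k)) - phi (P (r * vs k))))
            (f xb + r * (phi (x - xb + P (r * vb)) - phi (P (r * vb))))).
  { apply is_lim_seq_plus'; [exact Hfxs|].
    apply (is_lim_seq_scal_l _ r (Finite _)), is_lim_seq_minus'.
    - apply is_lim_seq_continuous; [apply Hphi|].
      apply is_lim_seq_plus'; [|exact HPs].
      apply is_lim_seq_minus'; [apply is_lim_seq_const | exact Hxs].
    - apply is_lim_seq_continuous; [apply Hphi | exact HPs]. }
  apply Rle_ge.
  refine (is_lim_seq_le _ (fun _ => f x) _ _ _ Hlim (is_lim_seq_const _)).
  intros k. apply Rge_le, frechet_subdiff_shifted_max_ineq, Hfrechet.
Qed.

End Standing.

Theorem mainTheorem16 (phi : R -> R) (Hphi : standing_assumption phi)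
  (r : R) (Hr : r = 1 \/ r = -1)
  (N : nat) (y beta : nat -> R) :
  let f := fun x => max_upto N (fun i => r * phi (x - y i) - beta i) in
  (r = 1 -> a_strongly_convex phi f) /\ (r = -1 -> a_weakly_convex phi f).
Proof.
  destruct Hphi as [Hconv [Hdiff [_ [_ [_ [_ [_ [_ [_ [HPD HDP]]]]]]]]]].
  intros f. split; intros Hr1 xb vb Hsub x;
    pose proof (limiting_subdiff_shifted_max_ineq phi Hconv Hdiff HPD HDP r N y beta Hr
                  xb vb x Hsub) as H;
    subst r; unfold f; cbv beta.
  - rewrite (Rmult_1_l vb) in H. lra.
  - replace (-1 * vb) with (- vb) in H by ring. lra.
Qed.
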